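(* Let $A \in \mathbb{R}^{n \times r}$, $B \in \mathbb{R}^{r \times n}$, $s=\mathrm{rank}(A)$, and for $\kappa\in\mathbb{R}^r_+$ let $f_\kappa\colon\mathbb{R}^n_+\to\mathbb{R}^n$, $f_\kappa(x)=A_\kappa x^B$. The following are equivalent: (inj) $f_\kappa$ is injective with respect to $\mathrm{im}(A)$, for all $\kappa \in \mathbb{R}^r_+$; (min) for all $I\subseteq [n]$, $J\subseteq [r]$ of cardinality $s$, the product $\det(A_{I,J}) \det(B_{J,I})$ either is zero or has the same sign as all other nonzero such products, and at least one such product is nonzero.
   Context: $\mathbb{R}_+$ denotes the strictly positive reals. $(x^B)_j=\prod_i x_i^{b_{ji}}$ (real exponents), $A_\kappa=A\,\mathrm{diag}(\kappa)$, $[n]=\{1,\dots,n\}$, $M_{K,L}$ is the submatrix with rows in $K$ and columns in $L$. A function $g$ on $\mathbb{R}^n_+$ is injective with respect to $S$ if $x,y\in\mathbb{R}^n_+$, $x\ne y$, $x-y\in S$ imply $g(x)\neq g(y)$. *)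

From HB Require Import structures.
From Stdlib Require Import Reals ClassicalEpsilon FunctionalExtensionality.
From mathcomp Require Import all_boot all_order all_algebra.

Set Implicit Arguments.
Unset Strict Implicit.
Unset Printing Implicit Defensive.

Import GRing.Theory.

Definition R_eqb (x y : R) : bool := if Req_EM_T x y then true else false.
Lemma R_eqP : Equality.axiom R_eqb.
Proof. move=> x y; rewrite /R_eqb; case: Req_EM_T => h; by constructor. Qed.
HB.instance Definition _ := hasDecEq.Build R R_eqP.

Definition R_find (P : pred R) (n : nat) : option R :=
  match excluded_middle_informative (exists x, P x) with
  | left h => Some (proj1_sig (constructive_indefinite_description _ h))
  | right _ => None
  end.
Lemma R_find_correct P n x : R_find P n = Some x -> P x.
Proof.
rewrite /R_find; case: excluded_middle_informative => // h [<-].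
exact: proj2_sig (constructive_indefinite_description _ h).
Qed.
Lemma R_find_complete (P : pred R) : (exists x, P x) -> exists n, R_find P n.
Proof. move=> h; exists 0%N; rewrite /R_find; by case: excluded_middle_informative. Qed.
Lemma R_find_ext (P Q : pred R) : P =1 Q -> R_find P =1 R_find Q.
Proof. move=> h; have -> : P = Q by apply: functional_extensionality. by []. Qed.
HB.instance Definition _ := hasChoice.Build R R_find_correct R_find_complete R_find_ext.

Lemma R_addA : associative Rplus. Proof. move=> x y z; ring. Qed.
Lemma R_addC : commutative Rplus. Proof. move=> x y; ring. Qed.
Lemma R_add0 : left_id R0 Rplus. Proof. move=> x; ring. Qed.
Lemma R_addN : left_inverse R0 Ropp Rplus. Proof. move=> x; ring. Qed.
HB.instance Definition _ := GRing.isZmodule.Build R R_addA R_addC R_add0 R_addN.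

Lemma R_mulA : associative Rmult. Proof. move=> x y z; ring. Qed.
Lemma R_mulC : commutative Rmult. Proof. move=> x y; ring. Qed.
Lemma R_mul1 : left_id R1 Rmult. Proof. move=> x; ring. Qed.
Lemma R_mulDl : left_distributive Rmult Rplus. Proof. move=> x y z; ring. Qed.
Lemma R_one_neq0 : (R1 : R) != R0.
Proof. apply/eqP; exact: R1_neq_R0. Qed.
HB.instance Definition _ :=
  GRing.Zmodule_isComNzRing.Build R R_mulA R_mulC R_mul1 R_mulDl R_one_neq0.

Definition R_inv (x : R) : R := if x == R0 then R0 else Rinv x.
Lemma R_mulVf (x : R) : x != R0 -> Rmult (R_inv x) x = R1.
Proof.
rewrite /R_inv => hx; rewrite (negbTE hx); apply: Rinv_l => h; by rewrite h eqxx in hx.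
Qed.
Lemma R_inv0 : R_inv R0 = R0. Proof. by rewrite /R_inv eqxx. Qed.
HB.instance Definition _ := GRing.ComNzRing_isField.Build R R_mulVf R_inv0.

Local Open Scope ring_scope.

Definition monomials (n r : nat) (B : 'M[R]_(r, n)) (x : 'I_n -> R) : 'I_r -> R :=
  fun j => \prod_(i < n) Rpower (x i) (B j i).

(* f_kappa(x) = A_kappa x^B = A diag(kappa) x^B *)
Definition f_kappa (n r : nat) (A : 'M[R]_(n, r)) (B : 'M[R]_(r, n))
  (kappa : 'I_r -> R) (x : 'I_n -> R) : 'I_n -> R :=
  fun i => \sum_(j < r) A i j * kappa j * monomials B x j.

Definition positive_vec (m : nat) (x : 'I_m -> R) : Prop := forall i, Rlt R0 (x i).

Definition in_image (n r : nat) (A : 'M[R]_(n, r)) (z : 'I_n -> R) : Prop :=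
  exists v : 'I_r -> R, forall i, z i = \sum_(j < r) A i j * v j.

Definition injective_wrt_image (n r : nat) (A : 'M[R]_(n, r)) (g : ('I_n -> R) -> ('I_n -> R)) : Prop :=
  forall x y : 'I_n -> R, positive_vec x -> positive_vec y -> x <> y ->
    in_image A (fun i => x i - y i) -> g x <> g y.

(* submatrix M_{K,L} with rows K and columns L (listed increasingly), |K| = |L| = s *)
Definition submx_sets (m p s : nat) (M : 'M[R]_(m, p)) (K : {set 'I_m}) (L : {set 'I_p})
  (hK : #|K| = s) (hL : #|L| = s) : 'M[R]_s :=
  \matrix_(a < s, b < s) M (enum_val (cast_ord (esym hK) a)) (enum_val (cast_ord (esym hL) b)).

Definition minor_prod (n r s : nat) (A : 'M[R]_(n, r)) (B : 'M[R]_(r, n))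
  (I : {set 'I_n}) (J : {set 'I_r}) (hI : #|I| = s) (hJ : #|J| = s) : R :=
  \det (submx_sets A hI hJ) * \det (submx_sets B hJ hI).

From Stdlib Require Import Reals Psatz FunctionalExtensionality Classical.
From mathcomp Require Import all_boot all_order all_algebra perm.

(* Let A = C F be the rank factorization (C = col_base A, F = row_base A, of
   rank s).  For positive x, y the mean value theorem for exp, applied to the
   monomials and to the logarithms, gives positive lam, gam with
     f_kappa(x) - f_kappa(y) = A diag(lam) B diag(gam) (x - y),
   and for x - y = A v this equals C N(lam, gam) F v with the s x s matrix
   N(lam, gam) = F diag(lam) B diag(gam) C.  Cauchy-Binet, applied twice, shows
     det N(lam, gam) = sum_{I,J} lam^J gam^I det(A_{I,J}) det(B_{J,I}),
   the "minor polynomial".  Both conditions of the theorem are then equivalent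
   to: the minor polynomial has no zero on the positive orthant.
   - (inj) <-> no zero: a zero gives a kernel vector t of N, and x, y can be
     chosen with x - y = C t and the prescribed slopes; conversely, invertible
     N forces F v = 0, i.e. x = y.
   - (min) <-> no zero: equal signs make all terms of the polynomial of one
     sign; opposite signs at two vertices of the (multiaffine) polynomial give
     a zero in the open orthant by moving along coordinate segments. *)

Set Implicit Arguments.
Unset Strict Implicit.
Unset Printing Implicit Defensive.

Import GRing.Theory.
Local Open Scope ring_scope.

(** The Cauchy-Binet formula, over an arbitrary commutative ring. *)
Section CauchyBinet.
Variable K : comNzRingType.

(* The increasing enumeration of a set J of cardinality s, as a map 'I_s -> 'I_m;
   it is the indexing used by [submx_sets] in the statement. *)
Definition set_enum (m s : nat) (J : {set 'I_m}) (h : #|J| = s) : 'I_s -> 'I_m :=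
  fun a => enum_val (cast_ord (esym h) a).

Lemma set_enum_in m s (J : {set 'I_m}) (h : #|J| = s) a : set_enum h a \in J.
Proof. exact: enum_valP. Qed.

Lemma set_enum_inj m s (J : {set 'I_m}) (h : #|J| = s) : injective (set_enum h).
Proof. by move=> a b /enum_val_inj /cast_ord_inj. Qed.

Lemma imset_set_enum m s (J : {set 'I_m}) (h : #|J| = s) : set_enum h @: setT = J.
Proof.
apply/eqP; rewrite eqEcard; apply/andP; split.
  by apply/subsetP=> j /imsetP [a _ ->]; exact: set_enum_in.
by rewrite card_imset ?cardsT ?card_ord ?h //; exact: set_enum_inj.
Qed.

(* Multilinearity of the determinant in the rows of P *m Q: a sum over all
   maps f choosing, for each row a, the row f a of Q. *)
Lemma det_mulmx_expand s m (P : 'M[K]_(s, m)) (Q : 'M[K]_(m, s)) :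
  \det (P *m Q) =
  \sum_(f : {ffun 'I_s -> 'I_m}) (\prod_a P a (f a)) * \det (rowsub f Q).
Proof.
rewrite /(\det _).
pose PQ (t : 'S_s) i j := P i j * Q j (t i).
transitivity (\sum_(t : 'S_s) \sum_(f : {ffun 'I_s -> 'I_m})
                 (-1) ^+ t * \prod_i PQ t i (f i)).
  apply: eq_bigr => /= t _; rewrite -big_distrr /=.
  congr (_ * _); rewrite -(bigA_distr_bigA (PQ t)) /=.
  by apply: eq_bigr => x _; rewrite mxE.
rewrite exchange_big; apply: eq_bigr => f _ /=.
rewrite big_distrr /=; apply: eq_bigr => t _.
rewrite mulrCA; congr (_ * _); rewrite /PQ big_split /=; congr (_ * _).
by apply: eq_bigr => i _; rewrite mxE.
Qed.

Lemma det_rowsub_noninj s m (Q : 'M[K]_(m, s)) (f : {ffun 'I_s -> 'I_m}) :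
  ~~ injectiveb f -> \det (rowsub f Q) = 0.
Proof.
case/injectivePn=> i1 [i2 Di12 Ef12].
by apply: (determinant_alternate Di12) => j; rewrite !mxE Ef12.
Qed.

Definition binet_term s m (P : 'M[K]_(s, m)) (Q : 'M[K]_(m, s)) (J : {set 'I_m}) : K :=
  if #|J| =P s is ReflectT h
  then \det (colsub (set_enum h) P) * \det (rowsub (set_enum h) Q) else 0.

(* Cauchy-Binet: group the maps f of [det_mulmx_expand] by their image J;
   only injective f, i.e. reindexings of [set_enum] for #|J| = s, survive. *)
Lemma cauchy_binet s m (P : 'M[K]_(s, m)) (Q : 'M[K]_(m, s)) :
  \det (P *m Q) = \sum_(J : {set 'I_m}) binet_term P Q J.
Proof.
rewrite det_mulmx_expand.
rewrite (partition_big (fun f : {ffun 'I_s -> 'I_m} => f @: setT) predT) //=.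
apply: eq_bigr => J _; rewrite /binet_term; case: eqP => [h|hne]; last first.
  apply: big1 => f /eqP fJ; case: (boolP (injectiveb f)) => [/injectiveP fi|fni].
    by case: hne; rewrite -fJ card_imset // cardsT card_ord.
  by rewrite det_rowsub_noninj ?mulr0.
pose lift_f (g : {ffun 'I_s -> 'I_s}) : {ffun 'I_s -> 'I_m} := [ffun a => set_enum h (g a)].
have lift_inj : {in setT &, injective lift_f}.
  move=> g1 g2 _ _ /ffunP E; apply/ffunP => a; move: (E a); rewrite !ffunE.
  exact: set_enum_inj.
transitivity (\sum_(f in lift_f @: setT) (\prod_a P a (f a)) * \det (rowsub f Q)).
  rewrite [LHS]big_mkcond [RHS]big_mkcond /=; apply: eq_bigr => f _.
  case: (boolP (injectiveb f)) => [/injectiveP fi|fni]; last first.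
    by rewrite det_rowsub_noninj ?mulr0 ?if_same.
  case: (boolP (f \in lift_f @: setT)) => [/imsetP [g _ Ef]|fnot].
    rewrite Ef in fi *.
    suff -> : lift_f g @: setT == J by [].
    rewrite eqEcard; apply/andP; split.
      by apply/subsetP => j /imsetP [a _ ->]; rewrite ffunE set_enum_in.
    by rewrite card_imset // cardsT card_ord h.
  case: eqP => // fJ; case/negP: fnot.
  have fJ_in a : f a \in J by rewrite -fJ; apply: imset_f.
  apply/imsetP; exists [ffun a => cast_ord h (enum_rank_in (fJ_in a) (f a))] => //.
  by apply/ffunP => a; rewrite !ffunE /set_enum cast_ordK enum_rankK_in.
rewrite big_imset //= -det_mulmx det_mulmx_expand.
apply: eq_big => [g|g _]; first by rewrite in_setT.
congr (_ * _); first by apply: eq_bigr => a _; rewrite !mxE ffunE.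
by congr (\det _); apply/matrixP => i j; rewrite !mxE ffunE.
Qed.

End CauchyBinet.

Section MatrixFacts.
Variable K : comNzRingType.

Lemma prod_set_enum m s (J : {set 'I_m}) (h : #|J| = s) (F : 'I_m -> K) :
  \prod_(a < s) F (set_enum h a) = \prod_(j in J) F j.
Proof.
rewrite -{2}(imset_set_enum h) big_imset /=; last by move=> a b _ _; exact: set_enum_inj.
by apply: eq_bigl => a; rewrite in_setT.
Qed.

Lemma rowsub_diag s m p (g : 'I_s -> 'I_m) (Q : 'M[K]_(m, p)) (d : 'rV[K]_m) :
  rowsub g (diag_mx d *m Q) = diag_mx (\row_a d 0 (g a)) *m rowsub g Q.
Proof. by rewrite !mul_diag_mx; apply/matrixP => i j; rewrite !mxE. Qed.

Lemma colsub_diag s m p (g : 'I_s -> 'I_m) (P : 'M[K]_(p, m)) (d : 'rV[K]_m) :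
  colsub g (P *m diag_mx d) = colsub g P *m diag_mx (\row_a d 0 (g a)).
Proof. by rewrite !mul_mx_diag; apply/matrixP => i j; rewrite !mxE. Qed.

End MatrixFacts.

(* The column basis of A has full column rank, hence is left-cancellable. *)
Lemma col_base_mulmx_eq0 (F : fieldType) m n p (A : 'M[F]_(m, n)) (w : 'M[F]_(\rank A, p)) :
  col_base A *m w = 0 -> w = 0.
Proof.
case/row_fullP: (col_base_full A) => Cl hCl Cw0.
by rewrite -[w]mul1mx -hCl -mulmxA Cw0 mulmx0.
Qed.

Lemma singular_kernel (F : fieldType) m (N : 'M[F]_m) :
  \det N = 0 -> exists2 t : 'cV[F]_m, t != 0 & N *m t = 0.
Proof.
move=> N0; have /det0P [w w0 wN] : \det N^T == 0 by rewrite det_tr N0.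
exists w^T; first by apply: contraNneq w0 => wT0; rewrite -[w]trmxK wT0 trmx0.
by rewrite -[N]trmxK -trmx_mul wN trmx0.
Qed.

Section ReducedMatrix.
Variables (n r : nat) (A : 'M[R]_(n, r)) (B : 'M[R]_(r, n)).
Local Notation s := (\rank A).

Definition reduced_mx (lam : 'I_r -> R) (gam : 'I_n -> R) : 'M[R]_s :=
  row_base A *m diag_mx (\row_j lam j) *m B *m diag_mx (\row_i gam i) *m col_base A.

Definition mixed_minor (I : {set 'I_n}) (J : {set 'I_r}) : R :=
  if #|I| =P s is ReflectT hI then
    if #|J| =P s is ReflectT hJ then minor_prod A B hI hJ else 0 else 0.

Definition minor_poly (lam : 'I_r -> R) (gam : 'I_n -> R) : R :=
  \sum_(I : {set 'I_n}) \sum_(J : {set 'I_r})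
     (\prod_(j in J) lam j) * (\prod_(i in I) gam i) * mixed_minor I J.

Lemma mixed_minorE (I : {set 'I_n}) (J : {set 'I_r}) (hI : #|I| = s) (hJ : #|J| = s) :
  mixed_minor I J = minor_prod A B hI hJ.
Proof.
rewrite /mixed_minor; case: eqP => [hI'|]; last by rewrite hI.
case: eqP => [hJ'|]; last by rewrite hJ.
by rewrite (eq_irrelevance hI' hI) (eq_irrelevance hJ' hJ).
Qed.

Lemma mixed_minor_card (I : {set 'I_n}) (J : {set 'I_r}) :
  #|I| != s \/ #|J| != s -> mixed_minor I J = 0.
Proof.
move=> H; rewrite /mixed_minor.
case: (#|I| =P s) => [hI|//]; case: (#|J| =P s) => [hJ|//].
by move: H; rewrite hI hJ eqxx; case.
Qed.

(* Two applications of Cauchy-Binet, using det(A_{I,J}) = det(C_I) det(F_J). *)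
Lemma det_reduced_mx lam gam : \det (reduced_mx lam gam) = minor_poly lam gam.
Proof.
have -> : reduced_mx lam gam = (row_base A *m diag_mx (\row_j lam j)) *m
     (B *m (diag_mx (\row_i gam i) *m col_base A)) by rewrite /reduced_mx !mulmxA.
rewrite cauchy_binet /minor_poly exchange_big /=.
apply: eq_bigr => J _; rewrite /binet_term.
case: (#|J| =P s) => [hJ|hJ]; last first.
  by rewrite big1 // => I _; rewrite mixed_minor_card ?mulr0 //; right; apply/eqP.
rewrite colsub_diag det_mulmx det_diag -mul_rowsub_mx cauchy_binet !big_distrr /=.
apply: eq_bigr => I _; rewrite /binet_term.
case: (#|I| =P s) => [hI|hI]; last first.
  by rewrite mixed_minor_card ?mulr0 // ?mul0r //; left; apply/eqP.
rewrite rowsub_diag det_mulmx det_diag (mixed_minorE hI hJ) /minor_prod /submx_sets.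
have -> : \matrix_(a, b) A (enum_val (cast_ord (esym hI) a)) (enum_val (cast_ord (esym hJ) b))
    = rowsub (set_enum hI) (col_base A) *m colsub (set_enum hJ) (row_base A).
  by rewrite -mxsub_mul mulmx_base.
have -> : \matrix_(a, b) B (enum_val (cast_ord (esym hJ) a)) (enum_val (cast_ord (esym hI) b))
    = colsub (set_enum hI) (rowsub (set_enum hJ) B).
  by apply/matrixP => i j; rewrite !mxE.
under eq_bigr => a _ do rewrite !mxE.
under [X in _ * (_ * (X * _))]eq_bigr => a _ do rewrite !mxE.
rewrite (prod_set_enum hJ lam) (prod_set_enum hI gam) det_mulmx.
set dF := \det (colsub _ (row_base A)); set dB := \det (colsub _ (rowsub _ B)).
set dC := \det (rowsub _ (col_base A)).
set pl := \prod_(j in J) lam j; set pg := \prod_(i in I) gam i.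
by rewrite /GRing.mul /=; ring.
Qed.

Lemma reduced_mx_factor lam gam (v : 'cV[R]_r) :
  A *m diag_mx (\row_j lam j) *m B *m diag_mx (\row_k gam k) *m (A *m v) =
  col_base A *m reduced_mx lam gam *m (row_base A *m v).
Proof. by rewrite /reduced_mx -{1 2}(mulmx_base A) !mulmxA. Qed.

End ReducedMatrix.

Section RealFacts.

(* The slope of the secant of exp between a and b (its derivative if a = b). *)
Definition exp_slope (a b : R) : R :=
  if Req_EM_T a b then R1 else Rdiv (Rminus (exp a) (exp b)) (Rminus a b).

(* exp is strictly increasing, so all its secant slopes are positive. *)
Lemma exp_slope_pos a b : Rlt R0 (exp_slope a b).
Proof.
rewrite /exp_slope; case: Req_EM_T => h /=; first exact: Rlt_0_1.
case: (Rlt_or_le a b) => hab.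
  have := exp_increasing _ _ hab => he.
  rewrite /Rdiv; apply: Rmult_neg_neg; first lra.
  apply: Rinv_lt_0_compat; lra.
have hba : Rlt b a by lra.
have := exp_increasing _ _ hba => he.
apply: Rdiv_lt_0_compat; lra.
Qed.

Lemma exp_slope_neq0 a b : exp_slope a b != 0.
Proof. by apply/eqP => E; have := exp_slope_pos a b; rewrite E; exact: Rlt_irrefl. Qed.

Lemma exp_sub a b : exp a - exp b = exp_slope a b * (a - b).
Proof.
rewrite /exp_slope; case: Req_EM_T => h /=; first by rewrite h !subrr mulr0.
by rewrite /GRing.mul /GRing.add /GRing.opp /=; field; lra.
Qed.

Lemma monomials_sub n r (B : 'M[R]_(r, n)) (x y : 'I_n -> R) j :
  monomials B x j - monomials B y j =
  exp_slope (\sum_k B j k * ln (x k)) (\sum_k B j k * ln (y k)) *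
  \sum_k B j k * (ln (x k) - ln (y k)).
Proof.
have exp_sum (F : 'I_n -> R) : exp (\sum_k F k) = \prod_k exp (F k).
  by elim/big_rec2: _ => [|i u w _ <-]; [exact: exp_0 | exact: exp_plus].
rewrite /monomials !(eq_bigr _ (fun k _ => erefl (Rpower _ _))) /Rpower.
rewrite -!exp_sum exp_sub; congr (_ * _).
by rewrite -sumrB; apply: eq_bigr => k _; rewrite mulrBr.
Qed.

Lemma ln_secant x y : Rlt R0 x -> Rlt R0 y ->
  (exp_slope (ln x) (ln y))^-1 * (x - y) = ln x - ln y.
Proof.
move=> xp yp; have -> : x - y = exp (ln x) - exp (ln y) by rewrite !exp_ln.
by rewrite exp_sub mulrA mulVf ?mul1r // exp_slope_neq0.
Qed.

Lemma invR_pos (x : R) : Rlt R0 x -> Rlt R0 x^-1.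
Proof.
move=> xp; rewrite /GRing.inv /= /R_inv; case: eqP => [x0|_]; last exact: Rinv_0_lt_compat.
by rewrite x0 in xp; lra.
Qed.

Lemma prod_pos (T : finType) (P : pred T) (F : T -> R) :
  (forall i, Rlt R0 (F i)) -> Rlt R0 (\prod_(i | P i) F i).
Proof.
move=> h; elim/big_rec: _ => [|i x _ hx]; first exact: Rlt_0_1.
exact: Rmult_lt_0_compat.
Qed.

Lemma sum_ge0 (T : finType) (P : pred T) (F : T -> R) :
  (forall i, P i -> Rle R0 (F i)) -> Rle R0 (\sum_(i | P i) F i).
Proof.
move=> h; elim/big_rec: _ => [|i x Pi hx]; first exact: Rle_refl.
by have := h i Pi; rewrite /GRing.add /=; lra.
Qed.

Lemma sum_gt0 (T : finType) (F : T -> R) i0 :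
  (forall i, Rle R0 (F i)) -> Rlt R0 (F i0) -> Rlt R0 (\sum_i F i).
Proof.
move=> h h0; rewrite (bigD1 i0) //=.
apply: Rplus_lt_le_0_compat => //; exact: sum_ge0.
Qed.

End RealFacts.

(* Mean-value linearization: when lam and gam record the secant slopes along
   x, y (hypotheses hlam, hgam), f_kappa(x) - f_kappa(y) equals
   A diag(lam) B diag(gam) (x - y); for x - y = A v this is C N(lam, gam) F v. *)
Lemma f_kappa_sub n r (A : 'M[R]_(n, r)) (B : 'M[R]_(r, n))
    (kappa lam : 'I_r -> R) (gam x y : 'I_n -> R) (v : 'cV[R]_r) :
  (forall j, lam j * (\sum_k B j k * (ln (x k) - ln (y k))) =
             kappa j * (monomials B x j - monomials B y j)) ->
  (forall k, gam k * (x k - y k) = ln (x k) - ln (y k)) ->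
  \col_k (x k - y k) = A *m v ->
  \col_i (f_kappa A B kappa x i - f_kappa A B kappa y i) =
  col_base A *m reduced_mx A B lam gam *m (row_base A *m v).
Proof.
move=> hlam hgam hv; rewrite -reduced_mx_factor -hv.
apply/matrixP => i j; rewrite -!mulmxA mul_diag_mx mul_diag_mx !mxE /f_kappa -sumrB.
apply: eq_bigr => l _; rewrite !mxE.
rewrite (eq_bigr (fun k => B l k * (ln (x k) - ln (y k)))); last by move=> k _; rewrite !mxE hgam.
by rewrite hlam mulrA -mulrBr.
Qed.

Section Conditions.
Variables (n r : nat) (A : 'M[R]_(n, r)) (B : 'M[R]_(r, n)).
Local Notation s := (\rank A).

Definition injective_for_all_rates : Prop :=
  forall kappa : 'I_r -> R, positive_vec kappa -> injective_wrt_image A (f_kappa A B kappa).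

Definition minors_same_sign : Prop :=
  forall (I I' : {set 'I_n}) (J J' : {set 'I_r})
    (hI : #|I| = s) (hJ : #|J| = s) (hI' : #|I'| = s) (hJ' : #|J'| = s),
    minor_prod A B hI hJ <> R0 -> minor_prod A B hI' hJ' <> R0 ->
    Rlt R0 (Rmult (minor_prod A B hI hJ) (minor_prod A B hI' hJ')).

Definition some_minor_nonzero : Prop :=
  exists (I : {set 'I_n}) (J : {set 'I_r}) (hI : #|I| = s) (hJ : #|J| = s),
    minor_prod A B hI hJ <> R0.

Definition minor_poly_nonvanishing : Prop :=
  forall (lam : 'I_r -> R) (gam : 'I_n -> R), positive_vec lam -> positive_vec gam ->
    minor_poly A B lam gam <> R0.

End Conditions.

Section SignConditionToInjectivity.
Variables (n r : nat) (A : 'M[R]_(n, r)) (B : 'M[R]_(r, n)).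
Local Notation s := (\rank A).

Lemma mixed_minor_aligned (I0 : {set 'I_n}) (J0 : {set 'I_r}) (h0 : #|I0| = s)
    (h0' : #|J0| = s) (I : {set 'I_n}) (J : {set 'I_r}) :
  minors_same_sign A B -> minor_prod A B h0 h0' <> R0 ->
  Rle R0 (Rmult (mixed_minor A B I J) (minor_prod A B h0 h0')).
Proof.
move=> same nz.
case: (#|I| =P s) => [hI|hI]; last by rewrite mixed_minor_card; [right; rewrite Rmult_0_l | left; apply/eqP].
case: (#|J| =P s) => [hJ|hJ]; last by rewrite mixed_minor_card; [right; rewrite Rmult_0_l | right; apply/eqP].
rewrite (mixed_minorE B hI hJ).
case: (Req_EM_T (minor_prod A B hI hJ) R0) => [->|nz']; first by right; rewrite Rmult_0_l.
by left; exact: same.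
Qed.

(* Multiplying by a fixed nonzero minor product makes every term of the minor
   polynomial nonnegative, and its own term positive. *)
Lemma nonvanishing_of_sign_condition :
  minors_same_sign A B -> some_minor_nonzero A B -> minor_poly_nonvanishing A B.
Proof.
move=> same [I0 [J0 [h0 [h0' nz]]]] lam gam lp gp.
pose m0 := minor_prod A B h0 h0'.
have term_ge0 (I : {set 'I_n}) (J : {set 'I_r}) :
    Rle R0 (\prod_(j in J) lam j * \prod_(i in I) gam i * mixed_minor A B I J * m0).
  rewrite Rmult_assoc; apply: Rmult_le_pos; last exact: mixed_minor_aligned.
  by apply/Rlt_le/Rmult_lt_0_compat; exact: prod_pos.
suff : Rlt R0 (minor_poly A B lam gam * m0)%R.
  by move=> H E; rewrite E mul0r in H; exact: Rlt_irrefl H.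
rewrite /minor_poly big_distrl /=.
apply: (sum_gt0 (i0 := I0)) => [I|]; rewrite big_distrl /=.
  by apply: sum_ge0 => J _; exact: term_ge0.
apply: (sum_gt0 (i0 := J0)) => [J|]; first exact: term_ge0.
rewrite (mixed_minorE B h0 h0') -/m0.
rewrite -mulrA; apply: Rmult_lt_0_compat; last exact: same.
by apply: Rmult_lt_0_compat; exact: prod_pos.
Qed.

(* If x - y = A v with f_kappa(x) = f_kappa(y), the linearization gives
   C N(lam, gam) F v = 0 for positive lam, gam; N is invertible, so F v = 0
   and x - y = C F v = 0. *)
Lemma injective_of_nonvanishing :
  minor_poly_nonvanishing A B -> injective_for_all_rates A B.
Proof.
move=> nonvan kappa kp x y xp yp xy [v hv] fxy.
pose gam k := (exp_slope (ln (x k)) (ln (y k)))^-1.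
pose lam j := kappa j * exp_slope (\sum_k B j k * ln (x k)) (\sum_k B j k * ln (y k)).
have lp : positive_vec lam by move=> j; apply: Rmult_lt_0_compat; [exact: kp | exact: exp_slope_pos].
have gp : positive_vec gam by move=> k; apply/invR_pos/exp_slope_pos.
have hlam j : lam j * (\sum_k B j k * (ln (x k) - ln (y k))) =
              kappa j * (monomials B x j - monomials B y j).
  by rewrite monomials_sub /lam mulrA.
have hgam k : gam k * (x k - y k) = ln (x k) - ln (y k) by exact: ln_secant.
pose w : 'cV[R]_r := \col_j v j.
have hw : \col_k (x k - y k) = A *m w.
  by apply/matrixP => i j; rewrite ord1 !mxE hv; apply: eq_bigr => k _; rewrite !mxE.
have fsub := f_kappa_sub hlam hgam hw.
have Nu : reduced_mx A B lam gam \in unitmx.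
  by rewrite unitmxE unitfE det_reduced_mx; apply/eqP; exact: nonvan.
have NFw0 : reduced_mx A B lam gam *m (row_base A *m w) = 0.
  apply: col_base_mulmx_eq0; rewrite mulmxA -fsub.
  by apply/matrixP => i j; rewrite !mxE fxy subrr.
have Fw0 : row_base A *m w = 0 by rewrite -(mulKmx Nu (row_base A *m w)) NFw0 mulmx0.
apply: xy; apply: functional_extensionality => k; apply/eqP; rewrite -subr_eq0.
have := congr1 (fun M : 'cV[R]_n => M k 0) hw.
by rewrite -(mulmx_base A) -mulmxA Fw0 mulmx0 !mxE => ->.
Qed.

End SignConditionToInjectivity.

Section SecantPair.
Local Open Scope R_scope.

Definition secant_lo (u g : R) : R := if Req_EM_T u 0 then 1 else u / (exp (g * u) - 1).
Definition secant_hi (u g : R) : R := secant_lo u g * exp (g * u).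

Lemma secant_pair u g : 0 < g ->
  [/\ 0 < secant_lo u g, 0 < secant_hi u g, secant_hi u g - secant_lo u g = u
    & ln (secant_hi u g) - ln (secant_lo u g) = g * u].
Proof.
move=> gp; rewrite /secant_hi /secant_lo; case: Req_EM_T => [hu0|hu] /=; first rewrite hu0.
  by rewrite Rmult_0_r exp_0 Rmult_1_r ln_1; split; lra.
have lo_pos : 0 < u / (exp (g * u) - 1).
  case: (Rlt_or_le 0 u) => hu0.
    have : exp 0 < exp (g * u) by apply: exp_increasing; nra.
    by rewrite exp_0 => he; apply: Rdiv_lt_0_compat; lra.
  have : exp (g * u) < exp 0 by apply: exp_increasing; nra.
  rewrite exp_0 => he; rewrite /Rdiv; apply: Rmult_neg_neg; first lra.
  apply: Rinv_lt_0_compat; lra.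
have den0 : exp (g * u) - 1 <> 0.
  by move=> h; rewrite h /Rdiv Rinv_0 Rmult_0_r in lo_pos; lra.
split => //; first by apply: Rmult_lt_0_compat => //; exact: exp_pos.
  by field.
by rewrite ln_mult ?ln_exp //; [ring | exact: exp_pos].
Qed.

End SecantPair.

(** (inj) implies that the minor polynomial has no positive zero: a zero
    (lam, gam) gives a kernel vector t of N(lam, gam); u = C t is a nonzero
    vector of im(A), and choosing x, y with x - y = u and prescribed slopes gam,
    and rates kappa matching lam, yields f_kappa(x) = f_kappa(y). *)
Lemma nonvanishing_of_injective n r (A : 'M[R]_(n, r)) (B : 'M[R]_(r, n)) :
  injective_for_all_rates A B -> minor_poly_nonvanishing A B.
Proof.
move=> inj lam gam lp gp P0.
have [t t0 Nt] := singular_kernel (etrans (det_reduced_mx A B lam gam) P0).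
case/row_freeP: (row_base_free A) => Fr hFr.
pose w := Fr *m t; pose u := A *m w.
have Fw : row_base A *m w = t by rewrite /w mulmxA hFr mul1mx.
have u0 : u != 0.
  apply: contraNneq t0 => hu; apply/eqP/col_base_mulmx_eq0.
  by rewrite -Fw mulmxA mulmx_base.
pose y i := secant_lo (u i 0) (gam i); pose x i := secant_hi (u i 0) (gam i).
have pair i := secant_pair (u i 0) (gp i).
have hxy i : x i - y i = u i 0 by case: (pair i).
pose slope j := exp_slope (\sum_k B j k * ln (x k)) (\sum_k B j k * ln (y k)).
pose kappa j := lam j / slope j.
have kp : positive_vec kappa by move=> j; apply: Rmult_lt_0_compat; [exact: lp | exact/invR_pos/exp_slope_pos].
have hlam j : lam j * (\sum_k B j k * (ln (x k) - ln (y k))) =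
              kappa j * (monomials B x j - monomials B y j).
  by rewrite monomials_sub /kappa mulrA divfK // exp_slope_neq0.
have hgam k : gam k * (x k - y k) = ln (x k) - ln (y k).
  by rewrite hxy; case: (pair k) => _ _ _ e2; exact: esym e2.
have hw : \col_k (x k - y k) = A *m w by apply/matrixP => i j; rewrite ord1 mxE hxy.
have fsub := f_kappa_sub hlam hgam hw.
rewrite Fw -mulmxA Nt mulmx0 in fsub.
apply: (inj kappa kp x y) => [i|i|exy||].
- by case: (pair i).
- by case: (pair i).
- case/eqP: u0; apply/matrixP => i j; rewrite ord1 -hxy exy !mxE.
  exact: subrr.
- exists (fun j => w j 0) => i; rewrite hxy mxE.
  by apply: eq_bigr.
- apply: functional_extensionality => i; apply/eqP; rewrite -subr_eq0; apply/eqP.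
  by have := congr1 (fun M : 'cV[R]_n => M i 0) fsub; rewrite !mxE.
Qed.

Section Multiaffine.
Variable V : finType.

Definition update (w : V -> R) (v : V) (t : R) : V -> R :=
  fun u => if u == v then t else w u.

Definition affine_line (phi : R -> R) : Prop := forall t, phi t = phi 0 + t * (phi 1 - phi 0).

Definition multiaffine (G : (V -> R) -> R) : Prop :=
  forall w v, affine_line (fun t => G (update w v t)).

Lemma update_id (w : V -> R) v : update w v (w v) = w.
Proof. by apply: functional_extensionality => u; rewrite /update; case: eqP => [->|]. Qed.

Lemma multiaffine_opp (G : (V -> R) -> R) : multiaffine G -> multiaffine (fun w => - G w).
Proof. by move=> hG w v t /=; rewrite hG /GRing.opp /GRing.add /GRing.mul /=; ring. Qed.

Lemma multiaffineE (G : (V -> R) -> R) : multiaffine G -> forall w v t,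
  G (update w v t) =
  Rplus (G (update w v R0)) (Rmult t (Rminus (G (update w v R1)) (G (update w v R0)))).
Proof. by move=> hG w v t; rewrite (hG w v t). Qed.

Local Open Scope R_scope.

(* Negativity at a point of the closed orthant propagates to the open orthant:
   raise the zero coordinates one by one, along the affine lines. *)
Lemma multiaffine_neg_interior (G : (V -> R) -> R) : multiaffine G ->
  forall w, (forall v, 0 <= w v) -> G w < 0 ->
  exists w', (forall v, 0 < w' v) /\ G w' < 0.
Proof.
move=> /multiaffineE hG w w0 Gw.
suff [w' [w'0 [w'pos Gw']]] : exists w', (forall v, 0 <= w' v) /\
    (forall v, v \in enum V -> 0 < w' v) /\ G w' < 0.
  by exists w'; split => // v; apply: w'pos; rewrite mem_enum.
elim: (enum V) => [|v S [w' [w'0 [w'pos Gw']]]]; first by exists w.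
case: (Rle_lt_or_eq_dec _ _ (w'0 v)) => hv.
  exists w'; split => //; split => // u; rewrite in_cons.
  by case/orP => [/eqP ->|]; [| exact: w'pos].
set a := G (update w' v 0); set b := G (update w' v 1) - a.
have Ew' : update w' v 0 = w' by rewrite hv update_id.
have ha : a < 0 by rewrite /a Ew'.
pose t := if Rle_dec b 0 then 1 else - a / (2 * b).
have tpos : 0 < t.
  rewrite /t; case: (Rle_dec b 0) => hb /=; first lra.
  apply: Rdiv_lt_0_compat; lra.
exists (update w' v t); split; last split.
- by move=> u; rewrite /update; case: eqP => _; [lra | exact: w'0].
- move=> u; rewrite in_cons /update; case: eqP => [_ _|_ /= hu] //; exact: w'pos.
- rewrite hG -/a -/b /t; case: (Rle_dec b 0) => hb /=; first nra.
  have -> : - a / (2 * b) * b = - a / 2 by field; lra.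
  lra.
Qed.

(* Intermediate value along a path of coordinate changes from w1 to w2, each
   step being an affine segment inside the open orthant. *)
Lemma multiaffine_root (G : (V -> R) -> R) : multiaffine G -> forall w1 w2,
  (forall v, 0 < w1 v) -> (forall v, 0 < w2 v) -> 0 < G w1 -> G w2 < 0 ->
  exists w, (forall v, 0 < w v) /\ G w = 0.
Proof.
move=> /multiaffineE hG w1 w2 p1 p2 g1 g2.
pose W (S : seq V) := foldr (fun v w => update w v (w2 v)) w1 S.
have WE S u : W S u = if u \in S then w2 u else w1 u.
  by elim: S => [|v S IH] //=; rewrite /update in_cons IH; case: eqP => [->|].
have Wpos S u : 0 < W S u by rewrite WE; case: ifP.
have WT : W (enum V) = w2.
  by apply: functional_extensionality => u; rewrite WE mem_enum.
suff : forall S, G (W S) <= 0 -> exists w, (forall v, 0 < w v) /\ G w = 0.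
  by move=> /(_ (enum V)); rewrite WT; apply; lra.
elim=> [|v S IH] /=; first by rewrite /W /=; lra.
case: (Rle_dec (G (W S)) 0) => hS; first by move=> _; exact: IH.
set w := W S in hS *; move=> hvS.
set a := G (update w v 0); set b := G (update w v 1) - a.
have e1 : G w = a + w v * b by rewrite -{1}(update_id w v) hG.
have e2 : G (update w v (w2 v)) = a + w2 v * b by rewrite hG.
have t1 : 0 < w v by exact: Wpos.
have t2 := p2 v.
have b0 : b <> 0 by move=> hb; rewrite hb in e1 e2; lra.
exists (update w v (- a / b)); split; last by rewrite hG -/a -/b; field.
move=> u; rewrite /update; case: eqP => _; last exact: Wpos.
case: (Rlt_or_le 0 b) => hb; first by apply: Rdiv_lt_0_compat; nra.
rewrite /Rdiv; apply: Rmult_neg_neg; [nra | apply: Rinv_lt_0_compat; lra].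
Qed.

End Multiaffine.

Lemma affine_line_ext (phi psi : R -> R) :
  (forall t, phi t = psi t) -> affine_line psi -> affine_line phi.
Proof. by move=> e h t; rewrite !e h. Qed.

Lemma affine_line_sum (T : finType) (phi : T -> R -> R) :
  (forall i, affine_line (phi i)) -> affine_line (fun t => \sum_i phi i t).
Proof.
move=> h t /=; rewrite (eq_bigr _ (fun i _ => h i t)) big_split /= -big_distrr /=.
by rewrite sumrB.
Qed.

Lemma affine_line_mulr c (phi : R -> R) : affine_line phi -> affine_line (fun t => phi t * c).
Proof. by move=> h t /=; rewrite h mulrDl -!mulrA mulrBl. Qed.

Lemma affine_line_mull c (phi : R -> R) : affine_line phi -> affine_line (fun t => c * phi t).
Proof. by move=> h t /=; rewrite h mulrDr mulrCA mulrBr. Qed.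

Lemma affine_line_prod_update (T : finType) (K : {set T}) (h : T -> R) k0 :
  affine_line (fun t => \prod_(k in K) (if k == k0 then t else h k)).
Proof.
have split_k0 t : \prod_(k in K) (if k == k0 then t else h k) =
    (if k0 \in K then t else 1) * \prod_(k in K | k != k0) h k.
  case: (boolP (k0 \in K)) => hk.
    rewrite (bigD1 k0) //= eqxx; congr (_ * _).
    by apply: eq_bigr => k /andP [_ /negPf ->].
  rewrite mul1r; apply: eq_big => k.
    by case: (k =P k0) => [->|/eqP ne]; [rewrite (negbTE hk) | rewrite ?ne ?andbT].
  by case: eqP => // -> kK; rewrite kK in hk.
apply: (affine_line_ext split_k0); apply: affine_line_mulr => t.
by case: (k0 \in K); rewrite ?subr0 ?add0r ?mulr1 ?subrr ?mulr0 ?addr0.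
Qed.

Section MinorPolySignChange.
Variables (n r : nat) (A : 'M[R]_(n, r)) (B : 'M[R]_(r, n)).
Local Notation s := (\rank A).
Local Notation V := ('I_r + 'I_n)%type.

Definition minor_poly_at (w : V -> R) : R :=
  minor_poly A B (fun j => w (inl j)) (fun i => w (inr i)).

Lemma minor_poly_multiaffine : multiaffine minor_poly_at.
Proof.
move=> w [j0|i0].
  apply: (@affine_line_ext _ (fun t => minor_poly A B
            (fun j => if j == j0 then t else w (inl j)) (fun i => w (inr i)))) => //.
  apply: affine_line_sum => I; apply: affine_line_sum => J.
  by do 2 apply: affine_line_mulr; exact: affine_line_prod_update.
apply: (@affine_line_ext _ (fun t => minor_poly A B
          (fun j => w (inl j)) (fun i => if i == i0 then t else w (inr i)))) => //.
apply: affine_line_sum => I; apply: affine_line_sum => J.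
by apply: affine_line_mulr; apply: affine_line_mull; exact: affine_line_prod_update.
Qed.

Definition indicator (I1 : {set 'I_n}) (J1 : {set 'I_r}) : V -> R :=
  fun k => match k with
           | inl j => if j \in J1 then 1 else 0
           | inr i => if i \in I1 then 1 else 0
           end.

Lemma indicator_ge0 I1 J1 v : Rle R0 (indicator I1 J1 v).
Proof. by case: v => [j|i] /=; case: ifP => _; solve [exact: Rle_0_1 | exact: Rle_refl]. Qed.

Lemma prod_indicator (T : finType) (J J1 : {set T}) :
  \prod_(j in J) (if j \in J1 then 1 else 0 : R) = if J \subset J1 then 1 else 0.
Proof.
case: (boolP (J \subset J1)) => [sub|/subsetPn [j jJ jn]].
  by apply: big1 => j jJ; rewrite (subsetP sub).
by rewrite (bigD1 j) //= (negbTE jn) mul0r.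
Qed.

(* At the indicator point only the term (I1, J1) survives: the other sets of
   cardinality s are not contained in I1, J1. *)
Lemma minor_poly_indicator (I1 : {set 'I_n}) (J1 : {set 'I_r}) (h1 : #|I1| = s) (h2 : #|J1| = s) :
  minor_poly_at (indicator I1 J1) = minor_prod A B h1 h2.
Proof.
rewrite /minor_poly_at /minor_poly /= -(mixed_minorE B h1 h2).
rewrite (bigD1 I1) //= (bigD1 J1) //= !prod_indicator !subxx !mul1r.
rewrite [X in _ + X = _]big1 ?addr0.
  rewrite big1 ?addr0 // => J nJ; rewrite prod_indicator.
  case: (boolP (J \subset J1)) => sJ; last by rewrite !mul0r.
  rewrite mixed_minor_card ?mulr0 //; right; apply: contra nJ => /eqP hJ.
  by rewrite eqEcard sJ h2 hJ leqnn.
move=> I nI; apply: big1 => J _; rewrite !prod_indicator.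
case: (boolP (I \subset I1)) => sI; last by rewrite mulr0 mul0r.
rewrite mixed_minor_card ?mulr0 //; left; apply: contra nI => /eqP hI.
by rewrite eqEcard sI h1 hI leqnn.
Qed.

(* Opposite signs at two indicator vertices give, after moving both into the
   open orthant, a positive zero of the minor polynomial. *)
Lemma root_of_opposite_minors (I I' : {set 'I_n}) (J J' : {set 'I_r})
    (hI : #|I| = s) (hJ : #|J| = s) (hI' : #|I'| = s) (hJ' : #|J'| = s) :
  Rlt R0 (minor_prod A B hI hJ) -> Rlt (minor_prod A B hI' hJ') R0 ->
  ~ minor_poly_nonvanishing A B.
Proof.
move=> pos neg nonvan.
have [w2 [w2p w2n]] : exists w, (forall v, Rlt R0 (w v)) /\ Rlt (minor_poly_at w) R0.
  apply: (multiaffine_neg_interior minor_poly_multiaffine (indicator_ge0 I' J')).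
  by rewrite (minor_poly_indicator hI' hJ').
have [w1 [w1p w1n]] : exists w, (forall v, Rlt R0 (w v)) /\ Rlt (- minor_poly_at w) R0.
  apply: (multiaffine_neg_interior (multiaffine_opp minor_poly_multiaffine) (indicator_ge0 I J)).
  by rewrite (minor_poly_indicator hI hJ); apply: Ropp_lt_gt_0_contravar.
have w1pos : Rlt R0 (minor_poly_at w1) by move: w1n; rewrite /GRing.opp /=; lra.
have [w [wp w0]] := multiaffine_root minor_poly_multiaffine w1p w2p w1pos w2n.
exact: (nonvan _ _ (fun j => wp (inl j)) (fun i => wp (inr i)) w0).
Qed.

End MinorPolySignChange.

Lemma minors_of_nonvanishing n r (A : 'M[R]_(n, r)) (B : 'M[R]_(r, n)) :
  minor_poly_nonvanishing A B -> minors_same_sign A B /\ some_minor_nonzero A B.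
Proof.
move=> nonvan; split.
  move=> I I' J J' hI hJ hI' hJ' nz nz'.
  case: (Rdichotomy _ _ nz) => m1; case: (Rdichotomy _ _ nz') => m2.
  - exact: Rmult_neg_neg.
  - by case: (root_of_opposite_minors m2 m1 nonvan).
  - by case: (root_of_opposite_minors m1 m2 nonvan).
  - exact: Rmult_lt_0_compat.
apply: NNPP => none; apply: (nonvan (fun _ => R1) (fun _ => R1)); try by move=> ?; exact: Rlt_0_1.
apply: big1 => I _; apply: big1 => J _.
case: (#|I| =P \rank A) => [hI|hI]; last by rewrite mixed_minor_card ?mulr0 //; left; apply/eqP.
case: (#|J| =P \rank A) => [hJ|hJ]; last by rewrite mixed_minor_card ?mulr0 //; right; apply/eqP.
have -> : mixed_minor A B I J = R0.
  by rewrite (mixed_minorE B hI hJ); apply: NNPP => nz; apply: none; exists I, J, hI, hJ.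
by rewrite mulr0.
Qed.

Theorem mainTheorem14 (n r : nat) (A : 'M[R]_(n, r)) (B : 'M[R]_(r, n)) :
  (forall kappa : 'I_r -> R, positive_vec kappa ->
     injective_wrt_image A (f_kappa A B kappa))
  <->
  ((forall (I I' : {set 'I_n}) (J J' : {set 'I_r})
       (hI : #|I| = \rank A) (hJ : #|J| = \rank A)
       (hI' : #|I'| = \rank A) (hJ' : #|J'| = \rank A),
       minor_prod A B hI hJ <> R0 -> minor_prod A B hI' hJ' <> R0 ->
       Rlt R0 (Rmult (minor_prod A B hI hJ) (minor_prod A B hI' hJ')))
   /\
   (exists (I : {set 'I_n}) (J : {set 'I_r})
       (hI : #|I| = \rank A) (hJ : #|J| = \rank A),
       minor_prod A B hI hJ <> R0)).
Proof.
split=> [inj | [same nz]].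
- exact: minors_of_nonvanishing (nonvanishing_of_injective inj).
- exact: injective_of_nonvanishing (nonvanishing_of_sign_condition same nz).
Qed.
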